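(* Let $w\in\mathcal S_n$. Then $\Gamma(a_{\min},(x,y,z))=0$ and $\Gamma(a_{\max},(x,y,z))=1$ for every triple $(x,y,z)\in\mathrm T_w$.
   Context: Permutations are in one-line notation; $\mathrm{Des}(u)=\{i: u_i>u_{i+1}\}$. A word $a=a_1\cdots a_\ell$ with letters in $\{1,\dots,n-1\}$ acts on a word of length $n$ by successively swapping the entries in positions $a_j$ and $a_j+1$. $\mathrm R(w)$ is the set of reduced words of $w$ (words of length $\ell(w)$, the number of inversions, whose action on $12\cdots n$ yields $w$). The word $a_{\min}$ (resp. $a_{\max}$) is defined as follows: set $w^0=w$; for $j=0,1,\dots,\ell(w)-1$ let $i_j$ be the smallest (resp. largest) element of $\mathrm{Des}(w^j)$ and let $w^{j+1}$ be obtained from $w^j$ by swapping the entries in positions $i_j$ and $i_j+1$; then $w^{\ell(w)}=12\cdots n$ and $a_{\min}$ (resp. $a_{\max}$) is the reduced word $i_{\ell(w)-1}\cdots i_1 i_0$. For $a\in\mathrm R(w)$ and an inversion $(p,q)$ of $w$ ($p>q$, $p$ left of $q$ in $w$), $P_a(p,q)$ is the index of the step of $a$ at which $p$ and $q$ are swapped. $\mathrm T_w$ is the set of triples $(x,y,z)$, $x<y<z$, with $z,y,x$ appearing in this order in $w$. $\Gamma(a,(x,y,z))=1$ if $P_a(y,x)>P_a(z,y)$ and $0$ otherwise. *)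

(* Permutations of {1..n} in one-line notation as seq nat. *)
From mathcomp Require Import all_boot.
Set Implicit Arguments. Unset Strict Implicit. Unset Printing Implicit Defensive.

(* Positions are 1-indexed: position p holds nth 0 u p.-1. *)

(* swap the entries in positions i and i+1 (1 <= i) *)
Definition swap_at (u : seq nat) (i : nat) : seq nat :=
  [seq nth 0 u (if k == i.-1 then i else if k == i then i.-1 else k)
  | k <- iota 0 (size u)].

Definition act (a : seq nat) (u : seq nat) : seq nat := foldl swap_at u a.

Definition idw (n : nat) : seq nat := iota 1 n.

Definition ninv (w : seq nat) : nat :=
  sumn [seq count (fun j => (i < j) && (nth 0 w j < nth 0 w i)) (iota 0 (size w))
       | i <- iota 0 (size w)].

Definition Des (u : seq nat) : seq nat :=
  [seq i <- iota 1 (size u).-1 | nth 0 u i < nth 0 u i.-1].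

Definition min_des (u : seq nat) : nat := head 0 (Des u).
Definition max_des (u : seq nat) : nat := last 0 (Des u).

Fixpoint sort_steps (pick : seq nat -> nat) (fuel : nat) (u : seq nat) : seq nat :=
  match fuel with
  | 0 => [::]
  | k.+1 => let i := pick u in i :: sort_steps pick k (swap_at u i)
  end.

Definition a_min (w : seq nat) : seq nat := rev (sort_steps min_des (ninv w) w).
Definition a_max (w : seq nat) : seq nat := rev (sort_steps max_des (ninv w) w).

(* the pair of values swapped at step j+1 (0-based j) of a acting on 12...n *)
Definition step_pair (n : nat) (a : seq nat) (j : nat) : nat * nat :=
  let u := act (take j a) (idw n) in
  let i := nth 0 a j in (nth 0 u i.-1, nth 0 u i).

(* P_a(p,q): (1-based) index of the step of a at which p and q are swapped *)
Definition P (n : nat) (a : seq nat) (p q : nat) : nat :=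
  (find (fun j => (step_pair n a j == (p, q)) || (step_pair n a j == (q, p)))
        (iota 0 (size a))).+1.

Definition inT (w : seq nat) (x y z : nat) : bool :=
  [&& x < y, y < z, x \in w, y \in w, z \in w,
      index z w < index y w & index y w < index x w].

Definition Gamma (n : nat) (a : seq nat) (x y z : nat) : nat :=
  if P n a z y < P n a y x then 1 else 0.

From mathcomp Require Import all_boot zify.
Set Implicit Arguments. Unset Strict Implicit.

(** Sorting [w] by swaps at descents strictly decreases the number of
  inversions, so after [ninv w] steps it reaches the identity, and read
  backwards the chosen positions form a reduced word [a]: step [j] of [a]
  undoes sorting step [ninv w - 1 - j].  Hence comparing [P_a]-values
  reverses the order in which pairs are swapped while sorting.  A pair
  [p < q] is never swapped once [p] precedes [q].  When [a_min] swaps [y]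
  and [x], [y] sits just left of the leftmost descent, so every entry to its
  left is smaller than [y]: [z] already follows [y], i.e. [z, y] were swapped
  earlier in the sorting.  Dually, when [a_max] swaps [z] and [y], [y] sits at
  the rightmost descent, so every entry to its right is larger and [x]
  already precedes [y]. *)

Definition swap_index (i k : nat) : nat :=
  if k == i.-1 then i else if k == i then i.-1 else k.

Lemma swap_indexK i : involutive (swap_index i).
Proof. by move=> k; rewrite /swap_index; do ! case: eqP => /=; lia. Qed.

Lemma swap_index_lt i k N : i < N -> k < N -> swap_index i k < N.
Proof. by rewrite /swap_index; do ! case: eqP => /=; lia. Qed.

Lemma swap_index_inversion i a b :
  0 < i -> a < b -> swap_index i b < swap_index i a -> a = i.-1 /\ b = i.
Proof. by rewrite /swap_index; do ! case: eqP => /= ?; lia. Qed.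

Lemma size_swap_at u i : size (swap_at u i) = size u.
Proof. by rewrite size_map size_iota. Qed.

Lemma nth_swap_at u i k :
  k < size u -> nth 0 (swap_at u i) k = nth 0 u (swap_index i k).
Proof. by move=> k_lt; rewrite (nth_map 0) ?size_iota // nth_iota. Qed.

Lemma swap_at0 u : swap_at u 0 = u.
Proof.
apply: (@eq_from_nth _ 0) => [|k k_lt]; first exact: size_swap_at.
rewrite size_swap_at in k_lt; rewrite nth_swap_at //.
by case: k {k_lt}.
Qed.

Lemma swap_atK u i : i < size u -> swap_at (swap_at u i) i = u.
Proof.
move=> i_lt; apply: (@eq_from_nth _ 0) => [|k]; rewrite !size_swap_at // => k_lt.
by rewrite !nth_swap_at ?size_swap_at ?swap_indexK ?swap_index_lt.
Qed.

Lemma swap_at_uniq u i : i < size u -> uniq u -> uniq (swap_at u i).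
Proof.
move=> i_lt uu; rewrite map_inj_in_uniq ?iota_uniq // => a b.
rewrite !mem_iota !add0n => /andP[_ a_lt] /andP[_ b_lt] /eqP.
rewrite nth_uniq ?swap_index_lt // => /eqP/(congr1 (swap_index i)).
by rewrite !swap_indexK.
Qed.

Lemma swap_at_subset u i : i < size u -> {subset swap_at u i <= u}.
Proof.
move=> i_lt x /mapP[k]; rewrite mem_iota add0n => /andP[_ k_lt] ->.
exact/mem_nth/(swap_index_lt i_lt k_lt).
Qed.

Lemma perm_swap_at u i : i < size u -> uniq u -> perm_eq (swap_at u i) u.
Proof.
move=> i_lt uu; apply: uniq_perm; rewrite ?swap_at_uniq // => x.
apply/idP/idP; first exact: swap_at_subset.
by rewrite -{1}(swap_atK i_lt); apply: swap_at_subset; rewrite size_swap_at.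
Qed.

Lemma index_swap_at u i p : i < size u -> uniq u -> p \in u ->
  index p (swap_at u i) = swap_index i (index p u).
Proof.
move=> i_lt uu pu; have p_lt : index p u < size u by rewrite index_mem.
have e : nth 0 (swap_at u i) (swap_index i (index p u)) = p.
  by rewrite nth_swap_at ?swap_index_lt // swap_indexK nth_index.
by rewrite -{1}e index_uniq ?size_swap_at ?swap_index_lt ?swap_at_uniq.
Qed.

Lemma mem_Des u i :
  (i \in Des u) = [&& 0 < i, i < size u & nth 0 u i < nth 0 u i.-1].
Proof.
rewrite mem_filter mem_iota.
by apply/andP/and3P => [[? /andP[? ?]]|[? ? ?]]; split => //; lia.
Qed.

Definition inversion_at (u : seq nat) (a b : nat) : bool :=
  (a < b) && (nth 0 u b < nth 0 u a).

Lemma ninvE u :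
  ninv u = \sum_(ab : 'I_(size u) * 'I_(size u)) inversion_at u ab.1 ab.2.
Proof.
have sum_iota F : \sum_(a <- iota 0 (size u)) F a = \sum_(a < size u) F a.
  by rewrite -(big_mkord xpredT) /index_iota subn0.
rewrite -(pair_bigA _ (fun a b : 'I_(size u) => nat_of_bool (inversion_at u a b))) /=.
rewrite /ninv sumnE big_map sum_iota; apply: eq_bigr => a _.
by rewrite -sumn_count sumnE big_map sum_iota.
Qed.

Lemma inversion_at_swap_at u i a b : i \in Des u -> a < size u -> b < size u ->
  inversion_at (swap_at u i) (swap_index i a) (swap_index i b) <= inversion_at u a b.
Proof.
rewrite mem_Des => /and3P[i_gt0 i_size desc] a_lt b_lt.
rewrite /inversion_at !nth_swap_at ?swap_indexK; try exact: swap_index_lt.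
case: (ltngtP a b) => [_|b_lt_a|->]; [by case: (_ < _) | | by rewrite ltnn].
case: ltnP => //= /(swap_index_inversion i_gt0 b_lt_a) [-> ->].
by rewrite ltnNge (ltnW desc).
Qed.

(* Reindexing pairs by the involution [swap_index i], every inversion of
  [swap_at u i] comes from one of [u], and the inversion [(i.-1, i)] is lost. *)
Lemma ninv_swap_at_lt u i : i \in Des u -> ninv (swap_at u i) < ninv u.
Proof.
move=> desc; have := desc; rewrite mem_Des => /and3P[i_gt0 i_size u_i].
set N := size u; rewrite !ninvE size_swap_at -/N.
pose s (a : 'I_N) : 'I_N := Ordinal (swap_index_lt i_size (ltn_ord a)).
have s2_inj : injective (fun ab => (s ab.1, s ab.2)).
  have swap_inj := inv_inj (swap_indexK i).
  by move=> [a b] [c d] [/swap_inj/val_inj -> /swap_inj/val_inj ->].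
rewrite (reindex_inj s2_inj) /=.
pose ab0 : 'I_N * 'I_N := (Ordinal (leq_ltn_trans (leq_pred i) i_size), Ordinal i_size).
rewrite (bigD1 ab0) // [X in _ < X](bigD1 ab0) //=.
have -> : swap_index i i.-1 = i by rewrite /swap_index eqxx.
have -> : swap_index i i = i.-1 by rewrite /swap_index eqxx; case: eqP; lia.
have -> : inversion_at (swap_at u i) i i.-1 = false by rewrite /inversion_at; lia.
have -> : inversion_at u i.-1 i by rewrite /inversion_at u_i andbT; lia.
rewrite add0n add1n ltnS; apply: leq_sum => -[a b] _.
exact: inversion_at_swap_at.
Qed.

Lemma Des_nil_idw n u : perm_eq u (idw n) -> Des u = [::] -> u = idw n.
Proof.
move=> pu noDes; apply: (sorted_eq leq_trans anti_leq _ (iota_sorted 1 n) pu).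
apply/(sortedP 0) => i i_lt; have : i.+1 \notin Des u by rewrite noDes.
by rewrite mem_Des /= i_lt -leqNgt.
Qed.

Lemma sorted_Des u : sorted leq (Des u).
Proof. exact/(sorted_filter leq_trans)/iota_sorted. Qed.

Lemma min_des_le u i : i \in Des u -> min_des u <= i.
Proof.
rewrite /min_des; have := sorted_Des u.
case: (Des u) => [|j s] //= /(order_path_min leq_trans)/allP le_j.
by rewrite inE => /predU1P[-> //|/le_j].
Qed.

Lemma max_des_ge u i : i \in Des u -> i <= max_des u.
Proof.
move=> desc; rewrite /max_des -nth_last -(nth_index 0 desc).
have i_lt : index i (Des u) < size (Des u) by rewrite index_mem.
apply: (sorted_leq_nth leq_trans leqnn 0 (sorted_Des u)); rewrite ?inE //; lia.
Qed.

Lemma nth_le_ascending u c m : m < size u -> c <= m ->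
  (forall i, c < i <= m -> i \notin Des u) -> nth 0 u c <= nth 0 u m.
Proof.
elim: m => [|m IH] m_lt c_le noDes; first by rewrite leqn0 in c_le; rewrite (eqP c_le).
case: (ltngtP c m.+1) c_le => [c_lt _|//|<- //]; apply: leq_trans (IH _ c_lt _) _.
- exact: ltnW.
- by move=> i /andP[c_i i_m]; apply: noDes; rewrite c_i; lia.
- have := noDes m.+1; rewrite mem_Des m_lt /= -leqNgt; apply; lia.
Qed.

(* As for [min_des] and [max_des], a descent-free word gets the junk value
  [0], and [swap_at u 0 = u]. *)
Definition descent_picker (pick : seq nat -> nat) : Prop :=
  forall u, if Des u is [::] then pick u = 0 else pick u \in Des u.

Lemma descent_picker_min_des : descent_picker min_des.
Proof. by move=> u; rewrite /min_des; case: (Des u) => //= i s; rewrite mem_head. Qed.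

Lemma descent_picker_max_des : descent_picker max_des.
Proof. by move=> u; rewrite /max_des; case: (Des u) => //= i s; rewrite mem_last. Qed.

Lemma nth_steps pick L u k : k < L ->
  nth 0 (sort_steps pick L u) k = pick (iter k (fun v => swap_at v (pick v)) u).
Proof. by elim: L u k => [|L IH] u [|k] //= k_lt; rewrite IH // -iterSr. Qed.

Lemma size_sort_steps pick L u : size (sort_steps pick L u) = L.
Proof. by elim: L u => [|L IH] u //=; rewrite IH. Qed.

Lemma index_idw n x : x \in idw n -> index x (idw n) = x.-1.
Proof.
rewrite mem_iota => /andP[x_gt0 x_lt].
have e : nth 0 (idw n) x.-1 = x by rewrite nth_iota; lia.
by rewrite -{1}e index_uniq ?size_iota ?iota_uniq; lia.
Qed.

Lemma find_iota_lt (a1 a2 : pred nat) N j0 : j0 < N -> a1 j0 ->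
  (forall j, j < N -> a2 j -> j0 < j) -> find a1 (iota 0 N) < find a2 (iota 0 N).
Proof.
move=> j0_lt a1_j0 a2_gt; apply: (@leq_trans j0.+1).
  by rewrite ltnS leqNgt; apply/negP => /(before_find 0); rewrite nth_iota // a1_j0.
rewrite leqNgt; apply/negP => lt_j0.
have a2_has : has a2 (iota 0 N) by rewrite has_find size_iota; lia.
have := nth_find 0 a2_has; rewrite nth_iota; last lia.
by rewrite add0n => /(a2_gt _ (leq_trans lt_j0 j0_lt)); lia.
Qed.

Lemma P_sym n a p q : P n a p q = P n a q p.
Proof. by rewrite /P; congr S; apply: eq_find => j; rewrite orbC. Qed.

Section DescentSorting.

Variable pick : seq nat -> nat.
Hypothesis pick_descent : descent_picker pick.

Lemma pickP u : pick u = 0 /\ Des u = [::] \/ pick u \in Des u.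
Proof. by have := pick_descent u; case: (Des u) => [|? ?]; [left|right]. Qed.

Definition sort_step u := swap_at u (pick u).

Definition sort_pair u := (nth 0 u (pick u), nth 0 u (pick u).-1).

Lemma sort_stepK u : swap_at (sort_step u) (pick u) = u.
Proof.
rewrite /sort_step; case: (pickP u) => [[-> _]|]; first by rewrite !swap_at0.
by rewrite mem_Des => /and3P[_ i_lt _]; rewrite swap_atK.
Qed.

Lemma sort_step_Des_nil u : Des u = [::] -> sort_step u = u.
Proof.
case: (pickP u) => [[e _] _|desc noDes]; first by rewrite /sort_step e swap_at0.
by rewrite noDes in desc.
Qed.

Lemma perm_sort_step u : uniq u -> perm_eq (sort_step u) u.
Proof.
rewrite /sort_step; case: (pickP u) => [[-> _]|]; first by rewrite swap_at0.
by rewrite mem_Des => /and3P[_ i_lt _]; apply: perm_swap_at.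
Qed.

Lemma sort_step_pair u :
  (nth 0 (sort_step u) (pick u).-1, nth 0 (sort_step u) (pick u)) = sort_pair u.
Proof.
rewrite /sort_pair /sort_step; case: (pickP u) => [[-> _]|]; first by rewrite swap_at0.
rewrite mem_Des => /and3P[i_gt0 i_lt _].
rewrite !nth_swap_at /swap_index ?eqxx ?ifN_eq //; lia.
Qed.

Lemma iter_sort_step_idw n u k : perm_eq u (idw n) -> ninv u <= k ->
  iter k sort_step u = idw n.
Proof.
elim: k u => [|k IH] u pu le_k; case: (pickP u) => [[_ noDes]|desc].
- exact: Des_nil_idw.
- by have := ninv_swap_at_lt desc; lia.
- by rewrite iter_fix ?sort_step_Des_nil // (Des_nil_idw pu).
have uu : uniq u by rewrite (perm_uniq pu) iota_uniq.
rewrite iterSr IH //; first exact: perm_trans (perm_sort_step uu) pu.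
by have := ninv_swap_at_lt desc; rewrite -/(sort_step u); lia.
Qed.

Lemma sort_pair_descent u p q : sort_pair u = (p, q) -> p != q -> pick u \in Des u.
Proof. by rewrite /sort_pair; case: (pickP u) => [[-> _] [<- <-]|//]; rewrite eqxx. Qed.

Lemma sort_pair_lt u p q : sort_pair u = (p, q) -> p != q -> p < q.
Proof. by move=> e /(sort_pair_descent e); rewrite mem_Des => /and3P[_ _]; case: e => -> ->. Qed.

Lemma index_sort_pair u p q : uniq u -> sort_pair u = (p, q) -> p != q ->
  index p u = pick u /\ index q u = (pick u).-1.
Proof.
move=> uu e /(sort_pair_descent e); rewrite mem_Des => /and3P[_ i_lt _].
case: e => <- <-; split; apply: index_uniq => //; exact: leq_ltn_trans (leq_pred _) i_lt.
Qed.

Lemma sort_step_inversion u p q : uniq u -> p \in u -> q \in u ->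
  index p u < index q u -> index q (sort_step u) < index p (sort_step u) ->
  sort_pair u = (q, p).
Proof.
move=> uu pu qu pq; case: (pickP u) => [[e _]|desc]; first by rewrite /sort_step e swap_at0; lia.
move: (desc); rewrite mem_Des => /and3P[i_gt0 i_lt _].
rewrite /sort_step !index_swap_at // => /(swap_index_inversion i_gt0 pq) [ep eq].
by rewrite /sort_pair -ep -eq !nth_index.
Qed.

Lemma sort_step_order u p q : uniq u -> p \in u -> q \in u -> p < q ->
  index p u < index q u -> index p (sort_step u) < index q (sort_step u).
Proof.
move=> uu pu qu pq before; have perm_u := perm_sort_step uu.
rewrite ltnNge leq_eqVlt negb_or; apply/andP; split.
  have [qs ps] : q \in sort_step u /\ p \in sort_step u by rewrite !(perm_mem perm_u).
  by apply/eqP => /(index_inj 0 qs ps) q_eq_p; rewrite q_eq_p ltnn in pq.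
apply/negP => /(sort_step_inversion uu pu qu before)/sort_pair_lt.
by move=> /(_ (negbT (gtn_eqF pq))); lia.
Qed.

Variables (n : nat) (w : seq nat).
Hypothesis perm_w : perm_eq w (idw n).

Definition stage k := iter k sort_step w.

Lemma perm_stage k : perm_eq (stage k) w.
Proof.
elim: k => [|k IH]; first exact: perm_refl.
have uu : uniq (stage k) by rewrite (perm_uniq IH) (perm_uniq perm_w) iota_uniq.
exact: perm_trans (perm_sort_step uu) IH.
Qed.

Lemma uniq_stage k : uniq (stage k).
Proof. by rewrite (perm_uniq (perm_stage k)) (perm_uniq perm_w) iota_uniq. Qed.

Lemma mem_stage k x : (x \in stage k) = (x \in w).
Proof. exact: perm_mem (perm_stage k) x. Qed.

Lemma stage_ninv : stage (ninv w) = idw n.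
Proof. exact: iter_sort_step_idw perm_w (leqnn _). Qed.

Lemma stage_order k k' p q : k <= k' -> p \in w -> q \in w -> p < q ->
  index p (stage k) < index q (stage k) -> index p (stage k') < index q (stage k').
Proof.
move=> /subnK <- pw qw pq before; elim: (k' - k) => [|d IH]; first by rewrite add0n.
by rewrite addSn; apply: sort_step_order IH; rewrite ?uniq_stage ?mem_stage.
Qed.

Lemma stage_flip p q : p \in w -> q \in w -> p < q -> index q w < index p w ->
  exists2 k, k < ninv w & sort_pair (stage k) = (p, q).
Proof.
move=> pw qw pq qp; pose ordered k := index p (stage k) < index q (stage k).
have ordered_end : ordered (ninv w).
  rewrite /ordered stage_ninv !index_idw -?(perm_mem perm_w) //.
  by move: pw qw; rewrite (perm_mem perm_w) !mem_iota; lia.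
have [[|k] ord_k min_k] := ex_minnP (ex_intro ordered _ ordered_end).
  by move: ord_k; rewrite /ordered /=; lia.
have k_lt : k < ninv w by apply: min_k.
have [pk qk] : p \in stage k /\ q \in stage k by rewrite !mem_stage.
exists k => //; apply: (sort_step_inversion (uniq_stage k)) => //.
rewrite ltnNge leq_eqVlt negb_or; apply/andP; split.
  by apply/eqP => /(index_inj 0 pk qk) p_eq_q; rewrite p_eq_q ltnn in pq.
by apply/negP => /min_k; lia.
Qed.

Definition sort_word := rev (sort_steps pick (ninv w) w).

Lemma nth_sort_word j : j < ninv w -> nth 0 sort_word j = pick (stage (ninv w - j.+1)).
Proof. by move=> j_lt; rewrite nth_rev size_sort_steps // nth_steps //; lia. Qed.

Lemma act_take_sort_word j : j <= ninv w ->
  act (take j sort_word) (idw n) = stage (ninv w - j).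
Proof.
elim: j => [_|j IH j_lt]; first by rewrite take0 subn0 stage_ninv.
rewrite (take_nth 0) ?size_rev ?size_sort_steps // /act foldl_rcons -/(act _ _).
rewrite IH 1?ltnW // nth_sort_word //.
have -> : ninv w - j = (ninv w - j.+1).+1 by lia.
exact: sort_stepK.
Qed.

Lemma step_pair_sort_word j : j < ninv w ->
  step_pair n sort_word j = sort_pair (stage (ninv w - j.+1)).
Proof.
move=> j_lt; rewrite /step_pair act_take_sort_word 1?ltnW // nth_sort_word //.
have -> : ninv w - j = (ninv w - j.+1).+1 by lia.
exact: sort_step_pair.
Qed.

Lemma P_sort_word_lt k p q r s : k < ninv w -> sort_pair (stage k) = (p, q) ->
  r \in w -> s \in w -> r < s -> index r (stage k) < index s (stage k) ->
  P n sort_word p q < P n sort_word r s.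
Proof.
move=> k_lt pair_k rw sw rs before; rewrite /P size_rev size_sort_steps ltnS.
apply: (find_iota_lt (j0 := ninv w - k.+1)) => [|/=|j j_lt /=]; first lia.
  rewrite step_pair_sort_word; last lia.
  have -> : ninv w - (ninv w - k.+1).+1 = k by lia.
  by rewrite pair_k eqxx.
rewrite step_pair_sort_word //; set k' := ninv w - j.+1 => pair_j.
have s_before_r : index s (stage k') < index r (stage k').
  have r_neq_s := negbT (ltn_eqF rs).
  case/orP: pair_j => /eqP pair_j; last by have := sort_pair_lt pair_j; lia.
  have [-> ->] := index_sort_pair (uniq_stage k') pair_j r_neq_s.
  by have := sort_pair_descent pair_j r_neq_s; rewrite mem_Des; lia.
case: (leqP k k') => [le_k|]; last lia.
by have := stage_order le_k rw sw rs before; lia.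
Qed.

End DescentSorting.

Lemma index_gt_pred_min_des u z : z \in u -> nth 0 u (min_des u).-1 < z ->
  (min_des u).-1 < index z u.
Proof.
move=> zu lt_z; rewrite ltnNge; apply/negP => le_z.
have m_lt : (min_des u).-1 < size u.
  case: (pickP descent_picker_min_des u) => [[-> _]|]; first by case: (u) zu.
  by rewrite mem_Des => /and3P[_ m_lt _]; apply: leq_ltn_trans (leq_pred _) m_lt.
have no_des i : index z u < i <= (min_des u).-1 -> i \notin Des u.
  by move=> i_in; apply/negP => /min_des_le; lia.
by have := nth_le_ascending m_lt le_z no_des; rewrite nth_index //; lia.
Qed.

Lemma index_lt_max_des u x : x \in u -> x < nth 0 u (max_des u) ->
  index x u < max_des u.
Proof.
move=> xu x_lt; rewrite ltnNge; apply/negP => le_x.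
have no_des i : max_des u < i <= index x u -> i \notin Des u.
  by move=> i_in; apply/negP => /max_des_ge; lia.
have x_at : index x u < size u by rewrite index_mem.
by have := nth_le_ascending x_at le_x no_des; rewrite nth_index //; lia.
Qed.

Lemma Gamma_a_min n w x y z : perm_eq w (idw n) -> inT w x y z ->
  Gamma n (a_min w) x y z = 0.
Proof.
move=> perm_w /and5P[xy yz xw yw /and3P[zw zy yx]].
have picker := descent_picker_min_des.
have [k k_lt pair_k] := stage_flip picker perm_w xw yw xy yx.
set u := stage _ _ k in pair_k.
have [_ y_at] :=
  index_sort_pair picker (uniq_stage picker perm_w k) pair_k (negbT (ltn_eqF xy)).
have y_before_z : index y u < index z u.
  rewrite y_at index_gt_pred_min_des ?(mem_stage picker perm_w) //.
  by case: pair_k => _ ->.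
have := P_sort_word_lt picker perm_w k_lt pair_k yw zw yz y_before_z.
by rewrite /Gamma (P_sym _ _ z) (P_sym _ _ y x) => lt; rewrite ltnNge (ltnW lt).
Qed.

Lemma Gamma_a_max n w x y z : perm_eq w (idw n) -> inT w x y z ->
  Gamma n (a_max w) x y z = 1.
Proof.
move=> perm_w /and5P[xy yz xw yw /and3P[zw zy yx]].
have picker := descent_picker_max_des.
have [k k_lt pair_k] := stage_flip picker perm_w yw zw yz zy.
set u := stage _ _ k in pair_k.
have [y_at _] :=
  index_sort_pair picker (uniq_stage picker perm_w k) pair_k (negbT (ltn_eqF yz)).
have x_before_y : index x u < index y u.
  rewrite y_at index_lt_max_des ?(mem_stage picker perm_w) //.
  by case: pair_k => -> _.
have := P_sort_word_lt picker perm_w k_lt pair_k xw yw xy x_before_y.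
by rewrite /Gamma (P_sym _ _ z) (P_sym _ _ y x) => ->.
Qed.

Theorem mainTheorem5 (n : nat) (w : seq nat) :
  perm_eq w (idw n) ->
  forall x y z : nat, inT w x y z ->
    Gamma n (a_min w) x y z = 0 /\ Gamma n (a_max w) x y z = 1.
Proof. by move=> perm_w x y z xyz; split; [apply: Gamma_a_min | apply: Gamma_a_max]. Qed.
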